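(* Let $T\ge0$ and let $a,k\in\{0,1,2,\dots\}$ with $a<k$. Then for every $b\in\mathbb N_+$ with $a<b\le k$, $$v(k-a-1,T)\le\alpha\,v(k-b,T)+(1-\alpha)\,v(k-a,T),\qquad \alpha=\frac{1}{b-a}.$$
   Context: Let $\lambda>0$ and let $N$ be a Poisson process with intensity $\lambda$, arrival times $0<\sigma_1<\sigma_2<\cdots$, and natural filtration $\mathcal F_t=\sigma(N_s:s\le t)$. Let $F:[0,\infty)\to[0,\infty)$ be strictly increasing and strictly convex with $F(0)=0$. For $k\in\{0,1,\dots\}$ let $\mathcal A_k$ be the set of $(\mathcal F_t)$-adapted, integer-valued, nonnegative, non-increasing processes $\xi$ with $\xi_0=k$ whose values change only at arrival times of $N$, and $v(k,T)=\inf_{\xi\in\mathcal A_k}\mathbb E[\sum_{i:\sigma_i\le T}F(\xi_{\sigma_i-}-\xi_{\sigma_i})+F(\xi_T)]$ (so $v(0,T)=0$). *)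

From HB Require Import structures.
From mathcomp Require Import all_boot all_order all_algebra.
From mathcomp Require Import all_classical all_reals all_analysis.
Set Implicit Arguments. Unset Strict Implicit. Unset Printing Implicit Defensive.
Import Order.TTheory GRing.Theory Num.Theory.
Import numFieldNormedType.Exports.
Local Open Scope classical_set_scope.
Local Open Scope ring_scope.

Section Defs.
Context {R : realType} {d : measure_display} {Omega : measurableType d}.

(* sigma 0 = 0 by convention; sigma i (i >= 1) is the i-th arrival time. *)
Definition interarrival (sigma : nat -> Omega -> R) (i : nat) (w : Omega) : R :=
  sigma i.+1 w - sigma i w.

Definition is_poisson_arrivals (P : probability Omega R) (lam : R)
    (sigma : nat -> Omega -> R) : Prop :=
  [/\ (forall w, sigma 0%N w = 0),
      (forall i w, sigma i w < sigma i.+1 w),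
      (forall i, measurable_fun setT (sigma i)),
      (forall i x, 0 <= x ->
         P [set w | x < interarrival sigma i w] = (expR (- (lam * x)))%:E) &
      (forall (s : seq nat) (B : nat -> set R), uniq s ->
         (forall i, measurable (B i)) ->
         P [set w | forall i, i \in s -> B i (interarrival sigma i w)] =
         (\prod_(i <- s) P [set w | B i (interarrival sigma i w)])%E)].

(* natural filtration F_t = sigma(N_s : s <= t); since {N_s >= i} = {sigma_i <= s},
   it is generated by the events {sigma_i <= s}, i >= 1, 0 <= s <= t. *)
Definition natural_filtration (sigma : nat -> Omega -> R) (t : R) : set (set Omega) :=
  <<s [set A | exists i s, [/\ (0 < i)%N, 0 <= s, s <= t & A = [set w | sigma i w <= s]]] >>.

Definition admissible (sigma : nat -> Omega -> R) (k : nat) (xi : R -> Omega -> nat) : Prop :=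
  [/\ (forall w, xi 0 w = k),
      (forall t n, 0 <= t -> natural_filtration sigma t [set w | xi t w = n]),
      (forall w s t, 0 <= s -> s <= t -> (xi t w <= xi s w)%N) &
      (forall w s t, 0 <= s -> s <= t ->
         (forall i, (0 < i)%N -> ~ (s < sigma i w /\ sigma i w <= t)) ->
         xi t w = xi s w)].

(* xi_{sigma_i -} = xi (sigma_{i-1}) since xi is constant on [sigma_{i-1}, sigma_i). *)
Definition cost (F : R -> R) (sigma : nat -> Omega -> R) (xi : R -> Omega -> nat)
    (T : R) (w : Omega) : \bar R :=
  ((\sum_(1 <= i <oo)
      (if (sigma i w <= T)%R then (F (xi (sigma i.-1 w) w - xi (sigma i w) w)%:R)%:E
       else 0%E)) + (F (xi T w)%:R)%:E)%E.

Definition value (P : probability Omega R) (F : R -> R) (sigma : nat -> Omega -> R)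
    (k : nat) (T : R) : \bar R :=
  ereal_inf [set (\int[P]_w cost F sigma xi T w)%E | xi in admissible sigma k].

End Defs.

From mathcomp Require Import all_boot all_order all_algebra.
From mathcomp Require Import all_classical all_reals all_analysis.
From mathcomp Require Import measurable_realfun.
From mathcomp Require Import zify ring lra.
Import Order.TTheory GRing.Theory Num.Theory.
Local Open Scope classical_set_scope.
Local Open Scope ring_scope.

(* The value v(., T) is midpoint convex in the initial inventory: if xi starts
   from a1 and eta from a2 with a1 + a2 = 2c, then the processes
   ceil((xi + eta)/2) and floor((xi + eta)/2) both start from c, and at every
   arrival (and at time T) their two jumps have the same total as the jumps of
   xi and eta but differ by at most one, so by convexity of F their joint cost
   is at most that of xi and eta.  Hence 2 v(c) <= v(a1) + v(a2); since
   0 <= v(k) <= F(k) the values are finite, and the chord inequality follows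
   from midpoint convexity of a real sequence. *)

Lemma measurable_fun_cst_on_cover d d' (T : measurableType d)
    (U : measurableType d') (I : countType) (f : T -> U) (A : I -> set T)
    (v : I -> U) :
  (forall n, measurable (A n)) -> (forall n w, A n w -> f w = v n) ->
  (forall w, exists n, A n w) -> measurable_fun setT f.
Proof.
move=> mA fA coverA _ Y mY; rewrite setTI.
have -> : f @^-1` Y = \bigcup_n (if `[< Y (v n) >] then A n else set0).
  apply/seteqP; split => w /=.
    move=> Yw; have [n An] := coverA w; exists n => //.
    by rewrite (fA _ _ An) in Yw; rewrite asboolT.
  by move=> [n _]; case: ifPn => // /asboolP Yv An; rewrite (fA _ _ An).
apply: countable_bigcupT_measurable; first exact: countableP.
by move=> n; case: ifPn.
Qed.

Lemma le_ereal_infD {R : realType} (A B : set \bar R) (c : \bar R) :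
  ereal_inf A \is a fin_num -> ereal_inf B \is a fin_num ->
  (forall x y, A x -> B y -> (c <= x + y)%E) ->
  (c <= ereal_inf A + ereal_inf B)%E.
Proof.
move=> finA finB cAB; rewrite -lee_subel_addr //; apply: le_ereal_inf_tmp => x Ax.
have lbx := ereal_inf_lbound Ax.
case: x Ax lbx => [r| |] Ax lbx; last 2 first.
- by rewrite leey.
- by move: finA; rewrite leeNy_eq in lbx; rewrite (eqP lbx).
rewrite lee_subel_addr // addeC -lee_subel_addr //.
apply: le_ereal_inf_tmp => y By; rewrite leeBlDl //; exact: cAB.
Qed.

Lemma midpoint_convex_incr {R : realDomainType} (u : nat -> R) :
  (forall n, u n.+1 + u n.+1 <= u n + u n.+2) ->
  forall i l, (i <= l)%N -> u i.+1 - u i <= u l.+1 - u l.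
Proof.
move=> mid i l /subnK <-; elim: (l - i)%N => [|n IH]; first by rewrite add0n.
by apply: le_trans IH _; rewrite addSn; have := mid (n + i)%N; lra.
Qed.

Lemma midpoint_convex_chord {R : realDomainType} (u : nat -> R) :
  (forall n, u n.+1 + u n.+1 <= u n + u n.+2) ->
  forall n j, (j <= n)%N -> j.+1%:R * u n <= u (n - j)%N + j%:R * u n.+1.
Proof.
move=> mid n; elim=> [|j IH] jn; first by rewrite subn0 mul1r mul0r addr0.
have := IH (ltnW jn).
have := midpoint_convex_incr u mid _ _ (leq_subr j.+1 n).
have -> : (n - j.+1).+1 = (n - j)%N by lia.
by rewrite -[j.+2%:R]natr1 -[j.+1%:R]natr1; lra.
Qed.

Lemma strictly_convex_convex {R : realFieldType} (F : R -> R) :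
  (forall x y t, 0 <= x -> 0 <= y -> x != y -> 0 < t -> t < 1 ->
     F (t * x + (1 - t) * y) < t * F x + (1 - t) * F y) ->
  forall x y t, 0 <= x -> 0 <= y -> 0 < t -> t < 1 ->
    F (t * x + (1 - t) * y) <= t * F x + (1 - t) * F y.
Proof.
move=> F_strict x y t x0 y0 t0 t1; have [<-|xy] := eqVneq x y.
  by rewrite -!mulrDl subrKC !mul1r.
exact/ltW/F_strict.
Qed.

Section Processes.
Context {R : realType} {d : measure_display} {Omega : measurableType d}.
Variable sigma : nat -> Omega -> R.

Lemma admissible_cst k : admissible sigma k (fun _ _ => k).
Proof.
split => // t n _; have [->|kn] := eqVneq k n.
  have -> : [set w : Omega | n = n] = setT by apply/seteqP; split.
  exact: (@measurableT _ (g_sigma_algebraType _)).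
have -> : [set w : Omega | k = n] = set0.
  by apply/seteqP; split => // w /= /eqP; rewrite (negbTE kn).
exact: sigma_algebra0.
Qed.

Definition merge_proc (h : nat -> nat) (xi eta : R -> Omega -> nat) :
    R -> Omega -> nat :=
  fun t w => h (xi t w + eta t w)%N.

Lemma merge_proc_admissible h {a1 a2 c xi eta} :
  {homo h : m n / (m <= n)%N} -> h (a1 + a2)%N = c ->
  admissible sigma a1 xi -> admissible sigma a2 eta ->
  admissible sigma c (merge_proc h xi eta).
Proof.
move=> h_homo hc [xi0 xi_adapted xi_le xi_cst] [eta0 eta_adapted eta_le eta_cst].
split.
- by move=> w; rewrite /merge_proc xi0 eta0.
- move=> t n t0.
  have -> : [set w | merge_proc h xi eta t w = n] = \bigcup_p \bigcup_q
      (if h (p + q)%N == n then [set w | xi t w = p] `&` [set w | eta t w = q]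
       else set0).
    apply/seteqP; split => w /=.
      by move=> <-; exists (xi t w) => //; exists (eta t w) => //; rewrite eqxx.
    move=> [p _ [q _]]; case: ifPn => // /eqP <- [/= xip etaq].
    by rewrite /merge_proc xip etaq.
  apply: sigma_algebra_bigcup => p; apply: sigma_algebra_bigcup => q.
  case: ifPn => _; last exact: sigma_algebra0.
  by apply: (@measurableI _ (g_sigma_algebraType _));
    [exact: xi_adapted | exact: eta_adapted].
- by move=> w s t s0 st; apply: h_homo; rewrite leq_add ?xi_le ?eta_le.
- by move=> w s t s0 st none; rewrite /merge_proc (xi_cst _ _ _ s0 st none)
    (eta_cst _ _ _ s0 st none).
Qed.

Lemma merge_proc_halves_admissible {a1 a2 c xi eta} : (a1 + a2 = c + c)%N ->
  admissible sigma a1 xi -> admissible sigma a2 eta ->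
  admissible sigma c (merge_proc uphalf xi eta) /\
  admissible sigma c (merge_proc half xi eta).
Proof.
move=> a12 adm_xi adm_eta; split.
- apply: (merge_proc_admissible _ uphalf_leq _ adm_xi adm_eta).
  by rewrite a12 addnn uphalf_double.
- apply: (merge_proc_admissible _ half_leq _ adm_xi adm_eta).
  by rewrite a12 addnn doubleK.
Qed.

End Processes.

Section Value.
Context {R : realType} {d : measure_display} {Omega : measurableType d}.
Variable sigma : nat -> Omega -> R.
Hypothesis sigma0 : forall w, sigma 0%N w = 0.
Hypothesis sigma_lt : forall i w, sigma i w < sigma i.+1 w.
Hypothesis measurable_sigma : forall i, measurable_fun setT (sigma i).

Lemma sigma_le w : {homo sigma^~ w : i j / (i <= j)%N >-> i <= j}.
Proof.
apply: (@homo_leq _ _ (fun x y => x <= y)) => [x|y x z|i].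
- exact: le_refl.
- exact: le_trans.
- exact: ltW.
Qed.

Lemma sigma_ge0 i w : 0 <= sigma i w.
Proof. by rewrite -(sigma0 w); exact: sigma_le. Qed.

Lemma admissible_cst_between {k xi i w t} : admissible sigma k xi ->
  sigma i w <= t -> t < sigma i.+1 w -> xi t w = xi (sigma i w) w.
Proof.
case=> _ _ _ xi_cst it ti; apply: xi_cst => //; first exact: sigma_ge0.
move=> j _ [ij jt]; have [ji|ij'] := leqP j i.
  by move/(sigma_le w): ji; rewrite leNgt ij.
by move/(sigma_le w): ij'; rewrite leNgt (le_lt_trans jt ti).
Qed.

Lemma measurable_sigma_le i (s : R) : measurable [set w | sigma i w <= s].
Proof.
have := measurable_sigma i measurableT _ (measurable_itv `]-oo, s]).
by rewrite setTI; congr measurable; apply/seteqP; split => w /=; rewrite in_itv.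
Qed.

Lemma measurable_sigma_gt i (s : R) : measurable [set w | s < sigma i w].
Proof.
have := measurable_sigma i measurableT _ (measurable_itv `]s, +oo[).
by rewrite setTI; congr measurable; apply/seteqP; split => w /=;
  rewrite in_itv /= andbT.
Qed.

Lemma natural_filtration_measurable t A :
  natural_filtration sigma t A -> measurable A.
Proof.
apply: smallest_sub; first exact: sigma_algebra_measurable.
by move=> B [i [s [_ _ _ ->]]]; exact: measurable_sigma_le.
Qed.

Lemma measurable_admissible_at_sigma {k xi} : admissible sigma k xi ->
  forall i n, measurable [set w | xi (sigma i w) w = n].
Proof.
move=> adm i n; have [_ xi_adapted _ _] := adm.
(* xi is constant on [sigma_i, sigma_{i+1}), which contains a rational time *)
have -> : [set w | xi (sigma i w) w = n] = \bigcup_(r : rat)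
    (if 0 <= ratr r :> R then [set w | sigma i w <= ratr r] `&`
       [set w | ratr r < sigma i.+1 w] `&` [set w | xi (ratr r) w = n]
     else set0).
  apply/seteqP; split => w /=.
    move=> xin; have [r] := rat_in_itvoo (sigma_lt i w).
    rewrite in_itv /= => /andP[ir ri]; exists r => //.
    rewrite (le_trans (sigma_ge0 i w) (ltW ir)) /=.
    by rewrite (admissible_cst_between adm (ltW ir) ri) (ltW ir).
  move=> [r _]; case: ifPn => // _ [[ir ri] xin].
  by rewrite -(admissible_cst_between adm ir ri).
apply: bigcupT_measurable_rat => r; case: ifPn => // r0.
apply: measurableI; first apply: measurableI.
- exact: measurable_sigma_le.
- exact: measurable_sigma_gt.
- exact: natural_filtration_measurable (xi_adapted _ _ r0).
Qed.

Variable F : R -> R.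
Hypothesis F_ge0 : forall x, 0 <= x -> 0 <= F x.

Definition jump_cost (xi : R -> Omega -> nat) (T : R) (i : nat) (w : Omega) :=
  if sigma i w <= T then (F (xi (sigma i.-1 w) w - xi (sigma i w) w)%:R)%:E
  else 0%E.

Lemma costE xi T w : cost F sigma xi T w =
  (\sum_(1 <= i <oo) jump_cost xi T i w + (F (xi T w)%:R)%:E)%E.
Proof. by []. Qed.

Lemma jump_cost_ge0 xi T i w : (0 <= jump_cost xi T i w)%E.
Proof. by rewrite /jump_cost; case: ifPn; rewrite // lee_fin F_ge0. Qed.

Lemma cost_ge0 xi T w : (0 <= cost F sigma xi T w)%E.
Proof.
rewrite costE adde_ge0 ?lee_fin ?F_ge0 //.
by apply: nneseries_ge0 => *; exact: jump_cost_ge0.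
Qed.

Lemma measurable_jump_cost k xi T i : admissible sigma k xi ->
  measurable_fun setT (jump_cost xi T i).
Proof.
move=> adm; have mxi := measurable_admissible_at_sigma adm.
apply: (@measurable_fun_cst_on_cover _ _ _ _ (nat * nat * bool)%type _
  (fun x => [set w | xi (sigma i.-1 w) w = x.1.1] `&`
    [set w | xi (sigma i w) w = x.1.2] `&`
    (if x.2 then [set w | sigma i w <= T] else ~` [set w | sigma i w <= T]))
  (fun x => if x.2 then (F (x.1.1 - x.1.2)%:R)%:E else 0%E)).
- move=> [[p q] b] /=; apply: measurableI; first exact: measurableI (mxi _ _) (mxi _ _).
  by case: b; last apply: measurableC; exact: measurable_sigma_le.
- move=> [[p q] b] w /= [[<- <-]]; rewrite /jump_cost.
  by case: b => /=; [move=> -> | move=> /negP/negbTE ->].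
- move=> w; exists (xi (sigma i.-1 w) w, xi (sigma i w) w, sigma i w <= T) => /=.
  by split => //; case: ifPn => //= /negP.
Qed.

Lemma measurable_cost k xi T : 0 <= T -> admissible sigma k xi ->
  measurable_fun setT (cost F sigma xi T).
Proof.
move=> T0 adm; have [_ xi_adapted _ _] := adm.
apply: emeasurable_funD.
  under eq_fun do rewrite eseries_cond.
  apply: (@ge0_emeasurable_sum _ _ _ _ _ (fun i => 0 < i)%N) => [n w _ _|n _].
    exact: jump_cost_ge0.
  exact: measurable_jump_cost adm.
apply: (@measurable_fun_cst_on_cover _ _ _ _ nat _ (fun n => [set w | xi T w = n])
  (fun n => (F n%:R)%:E)) => [n||w]; last by exists (xi T w).
- exact: natural_filtration_measurable (xi_adapted _ _ T0).
- by move=> n w /= ->.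
Qed.

Section Convex.
Hypothesis F_convex : forall x y t, 0 <= x -> 0 <= y -> 0 < t -> t < 1 ->
  F (t * x + (1 - t) * y) <= t * F x + (1 - t) * F y.

Lemma convex_sum_le_spread (x p q y : R) : 0 <= x -> x <= p -> p <= y ->
  p + q = x + y -> F p + F q <= F x + F y.
Proof.
move=> x0 xp py pqxy.
have [pxE|px] := eqVneq p x.
  by rewrite (_ : q = y) ?pxE //; lra.
have [pyE|py'] := eqVneq p y.
  by rewrite (_ : q = x) ?pyE 1?addrC //; lra.
have {}xp : x < p by rewrite lt_neqAle eq_sym px xp.
have {}py : p < y by rewrite lt_neqAle py' py.
have y0 : 0 <= y by lra.
pose t := (y - p) / (y - x).
have yx : y - x != 0 by rewrite subr_eq0 gt_eqF //; lra.
have t0 : 0 < t by apply: divr_gt0; lra.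
have t1 : t < 1 by rewrite /t ltr_pdivrMr; lra.
have pE : p = t * x + (1 - t) * y by rewrite /t; field.
have qE : q = t * y + (1 - t) * x by move: pqxy; rewrite pE; lra.
have := F_convex _ _ _ x0 y0 t0 t1; have := F_convex _ _ _ y0 x0 t0 t1.
by rewrite -pE -qE; lra.
Qed.

Lemma convex_sum_le_balanced p q x y : (p + q = x + y)%N -> (q <= p.+1)%N ->
  (p <= q.+1)%N -> F p%:R + F q%:R <= F x%:R + F y%:R.
Proof.
wlog xy : x y / (x <= y)%N.
  move=> wlog_xy e qp pq; have [xy|/ltnW yx] := leqP x y; first exact: wlog_xy.
  by rewrite [F x%:R + _]addrC; apply: wlog_xy; rewrite // e addnC.
wlog pq : p q / (p <= q)%N.
  move=> wlog_pq e qp pq; have [pq'|/ltnW qp'] := leqP p q; first exact: wlog_pq.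
  by rewrite [F p%:R + _]addrC; apply: wlog_pq; rewrite // addnC.
move=> e qp pq1; apply: convex_sum_le_spread; rewrite ?ler_nat -?natrD ?e //; lia.
Qed.

Lemma convex_sum_le_halves {A A' B B'} : (A' <= A)%N -> (B' <= B)%N ->
  F (uphalf (A + B) - uphalf (A' + B'))%:R + F ((A + B)./2 - (A' + B')./2)%:R
  <= F (A - A')%:R + F (B - B')%:R.
Proof.
move=> AA BB; apply: convex_sum_le_balanced;
  rewrite !uphalf_half; have := odd_double_half (A + B);
  have := odd_double_half (A' + B'); rewrite -!addnn;
  case: (odd (A + B)); case: (odd (A' + B')) => /=; lia.
Qed.

Lemma cost_merge_proc_le a1 a2 xi eta T w :
  admissible sigma a1 xi -> admissible sigma a2 eta ->
  (cost F sigma (merge_proc uphalf xi eta) T w +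
   cost F sigma (merge_proc half xi eta) T w <=
   cost F sigma xi T w + cost F sigma eta T w)%E.
Proof.
move=> [_ _ xi_le _] [_ _ eta_le _]; rewrite !costE addeACA [leRHS]addeACA.
apply: leeD; last first.
  rewrite -!EFinD lee_fin /merge_proc.
  by have := convex_sum_le_halves (leq0n (xi T w)) (leq0n (eta T w)); rewrite /= !subn0.
rewrite -!nneseriesD => [|i _ _|i _ _|i _ _|i _ _]; try exact: jump_cost_ge0.
apply: lee_nneseries => [i _ _|i _]; first by rewrite adde_ge0 ?jump_cost_ge0.
rewrite /jump_cost; case: ifPn => _; last by rewrite adde0.
have /(sigma_le w) le_prev := leq_pred i.
rewrite -!EFinD lee_fin /merge_proc; apply: convex_sum_le_halves.
- exact: xi_le (sigma_ge0 _ _) le_prev.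
- exact: eta_le (sigma_ge0 _ _) le_prev.
Qed.

Variable P : probability Omega R.
Hypothesis F0 : F 0 = 0.

Lemma value_fin_num k T : value P F sigma k T \is a fin_num.
Proof.
apply/fin_numPlt/andP; split.
  apply: lt_le_trans (ltNyr 0) _; apply: le_ereal_inf_tmp => _ [xi _ <-].
  by apply: integral_ge0 => w _; exact: cost_ge0.
apply: le_lt_trans (ltry (F k%:R)); apply: ereal_inf_lbound.
exists (fun _ _ => k); first exact: admissible_cst.
have -> : cost F sigma (fun _ _ => k) T = cst (F k%:R)%:E.
  apply/funext => w; rewrite costE eseries0 ?add0e // => i _ _.
  by rewrite /jump_cost subnn F0; case: ifPn.
by rewrite integral_cst // -[RHS]mule1; congr (_ * _)%E; exact: probability_setT.
Qed.

Lemma integral_cost_merge_proc_le {a1 a2 c xi eta T} : (a1 + a2 = c + c)%N ->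
  0 <= T -> admissible sigma a1 xi -> admissible sigma a2 eta ->
  (\int[P]_w cost F sigma (merge_proc uphalf xi eta) T w +
   \int[P]_w cost F sigma (merge_proc half xi eta) T w <=
   \int[P]_w cost F sigma xi T w + \int[P]_w cost F sigma eta T w)%E.
Proof.
move=> a12 T0 adm_xi adm_eta.
have [adm_up adm_lo] := merge_proc_halves_admissible sigma a12 adm_xi adm_eta.
have mcost k zeta := @measurable_cost k zeta T T0.
rewrite -!ge0_integralD //; try solve [move=> w _; exact: cost_ge0 |
  exact: mcost adm_xi | exact: mcost adm_eta | exact: mcost adm_up | exact: mcost adm_lo].
apply: ge0_le_integral => //.
- by move=> w _; rewrite adde_ge0 ?cost_ge0.
- by apply: emeasurable_funD; [exact: mcost adm_up | exact: mcost adm_lo].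
- by apply: emeasurable_funD; [exact: mcost adm_xi | exact: mcost adm_eta].
- by move=> w _; exact: cost_merge_proc_le adm_xi adm_eta.
Qed.

Lemma value_midpoint_le a1 a2 c T : (a1 + a2 = c + c)%N -> 0 <= T ->
  (value P F sigma c T + value P F sigma c T <=
   value P F sigma a1 T + value P F sigma a2 T)%E.
Proof.
move=> a12 T0; apply: le_ereal_infD; rewrite ?value_fin_num //.
move=> _ _ [xi adm_xi <-] [eta adm_eta <-].
have [adm_up adm_lo] := merge_proc_halves_admissible sigma a12 adm_xi adm_eta.
apply: le_trans (integral_cost_merge_proc_le a12 T0 adm_xi adm_eta).
by apply: leeD; apply: ereal_inf_lbound;
  [exists (merge_proc uphalf xi eta) | exists (merge_proc half xi eta)].
Qed.

End Convex.

End Value.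

Theorem corollary2p8 (R : realType) (d : measure_display) (Omega : measurableType d)
  (P : probability Omega R) (lam : R) (sigma : nat -> Omega -> R) (F : R -> R)
  (T : R) (a k b : nat) :
  0 < lam -> is_poisson_arrivals P lam sigma ->
  F 0 = 0 -> (forall x, 0 <= x -> 0 <= F x) ->
  (forall x y, 0 <= x -> x < y -> F x < F y) ->
  (forall x y t, 0 <= x -> 0 <= y -> x != y -> 0 < t -> t < 1 ->
     F (t * x + (1 - t) * y) < t * F x + (1 - t) * F y) ->
  0 <= T -> (a < k)%N -> (0 < b)%N -> (a < b)%N -> (b <= k)%N ->
  (value P F sigma (k - a - 1) T <=
     (((b - a)%:R : R)^-1)%:E * value P F sigma (k - b) T
     + (1 - ((b - a)%:R : R)^-1)%:E * value P F sigma (k - a) T)%E.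
Proof.
move=> _ [sigma0 sigma_lt measurable_sigma _ _] F0 F_ge0 _ F_strict T0 ak _ ab bk.
have F_convex := strictly_convex_convex F F_strict.
pose u n := fine (value P F sigma n T).
have vE n : value P F sigma n T = (u n)%:E.
  by rewrite fineK // value_fin_num.
have mid n : u n.+1 + u n.+1 <= u n + u n.+2.
  have := value_midpoint_le sigma sigma0 sigma_lt measurable_sigma F F_ge0 F_convex P F0
    n n.+2 n.+1 T (addnS _ _ : (n + n.+2 = n.+1 + n.+1)%N) T0.
  by rewrite !vE -!EFinD lee_fin.
set n := (k - a - 1)%N; set j := (b - a - 1)%N.
have -> : (k - b = n - j)%N by lia.
have -> : (b - a = j.+1)%N by lia.
have -> : (k - a = n.+1)%N by lia.
rewrite !vE -!EFinM -EFinD lee_fin -(ler_pM2l (ltr0Sn _ j)).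
have -> : j.+1%:R * (j.+1%:R^-1 * u (n - j)%N + (1 - j.+1%:R^-1) * u n.+1)
          = u (n - j)%N + j%:R * u n.+1 :> R.
  by rewrite -natr1; field; rewrite natr1 pnatr_eq0.
by apply: (midpoint_convex_chord u mid); lia.
Qed.
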